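(* Define, for integers $n,m,p\ge0$, $\mathcal{Z}_{n,m}(p)=\binom{m+p}{p}\sum_{k=0}^{m}s(m,k)\mathcal{B}_{n+k,p}$ and the polynomials $$\mathcal{Z}_{n,m}(x;p)=\sum_{k=0}^{n}\binom{n}{k}\mathcal{Z}_{k,m}(p)\,x^{n-k}.$$ Then for all integers $n,m,p\ge0$, $$\mathcal{Z}_{n+1,m}(x;p)=\frac{m+1}{m+p+1}\,\mathcal{Z}_{n,m+1}(x;p)+(m+x)\,\mathcal{Z}_{n,m}(x;p),$$ with $\mathcal{Z}_{0,m}(x;p)=1$.
   Context: $s(m,k)$ are the signed Stirling numbers of the first kind, defined by $x(x-1)\cdots(x-m+1)=\sum_{k=0}^m s(m,k)x^k$. For an integer $p\ge0$, the $p$-Bell numbers $\mathcal{B}_{n,p}$ are defined by $\sum_{n\ge0}\mathcal{B}_{n,p}\frac{z^n}{n!}=\sum_{n\ge0}\binom{n+p}{p}^{-1}\frac{(e^z-1)^n}{n!}$. *)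

From HB Require Import structures.
From mathcomp Require Import all_boot all_order all_algebra.
Set Implicit Arguments. Unset Strict Implicit. Unset Printing Implicit Defensive.
Import Order.TTheory GRing.Theory Num.Theory.
Local Open Scope ring_scope.

Definition stirling1 (m k : nat) : rat :=
  (\prod_(i < m) ('X - (i%:R)%:P) : {poly rat})`_k.

Definition expTrunc (N : nat) : {poly rat} :=
  \poly_(j < N.+1) (j`!%:R)^-1.

(* p-Bell numbers: B_{N,p} = N! [z^N] sum_{n>=0} C(n+p,p)^{-1} (e^z-1)^n / n!.
   Since e^z - 1 has zero constant term, only n <= N contribute to [z^N],
   and only the terms of e^z of degree <= N matter, so the coefficient
   extraction is done exactly on the truncated polynomial. *)
Definition pBell (N p : nat) : rat :=
  N`!%:R *
  (\sum_(n < N.+1)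
     ((('C(n + p, p))%:R)^-1 * (n`!%:R)^-1) *: (expTrunc N - 1) ^+ n)`_N.

Definition Zp (n m p : nat) : rat :=
  ('C(m + p, p))%:R * \sum_(k < m.+1) stirling1 m k * pBell (n + k) p.

Definition Zpoly (n m p : nat) : {poly rat} :=
  \sum_(k < n.+1) ((('C(n, k))%:R * Zp k m p) *: 'X^(n - k)).

(* Put Z_{n,m}(p) = C(m+p,p) T_n(m) with T_n(m) = sum_k s(m,k) B_{n+k,p}.  The
   recurrence s(m+1,k) = s(m,k-1) - m s(m,k) gives T_n(m+1) = T_{n+1}(m) - m T_n(m),
   i.e. Z_{n+1,m} = (m+1)/(m+p+1) Z_{n,m+1} + m Z_{n,m}, and Pascal's rule carries
   this over to the binomial polynomials Z_{n,m}(x;p).  For the initial value,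
   (e^z-1)^j/j! is the generating function of the Stirling numbers S(k,j) of the
   second kind, so B_{k,p} = sum_j S(k,j)/C(j+p,p), and the orthogonality
   sum_k s(m,k) S(k,j) = [m = j] gives T_0(m) = 1/C(m+p,p), i.e. Z_{0,m}(p) = 1. *)

From Pilot Require Import Defs.
From HB Require Import structures.
From mathcomp Require Import all_boot all_order all_algebra.
From mathcomp Require Import ring.
Import Order.TTheory GRing.Theory Num.Theory.
Local Open Scope ring_scope.

Section BinomialPoly.
Variable R : comNzRingType.

Definition binomial_poly (a : nat -> R) (n : nat) : {poly R} :=
  \sum_(k < n.+1) ('C(n, k)%:R * a k) *: 'X^(n - k).

Lemma eq_binomial_poly (a b : nat -> R) n :
  (forall k, a k = b k) -> binomial_poly a n = binomial_poly b n.
Proof. by move=> eq_ab; apply: eq_bigr => k _; rewrite eq_ab. Qed.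

Lemma binomial_polyS (a : nat -> R) n :
  binomial_poly a n.+1 = 'X * binomial_poly a n + binomial_poly (fun k => a k.+1) n.
Proof.
rewrite {1}/binomial_poly big_ord_recl bin0 subn0.
under eq_bigr do rewrite /bump /= binS natrD mulrDl scalerDl subSS.
rewrite big_split /= addrA; congr (_ + _).
rewrite /binomial_poly mulr_sumr [in LHS]big_ord_recr [in RHS]big_ord_recl /=.
rewrite bin_small // mul0r scale0r addr0 bin0 subn0 -scalerAr -exprS.
congr (_ + _).
by apply: eq_bigr => k _; rewrite -scalerAr -exprS /bump /= add1n subnSK.
Qed.

Lemma binomial_poly_rec (a b : nat -> R) (c d : R) n :
  (forall k, a k.+1 = c * b k + d * a k) ->
  binomial_poly a n.+1 = c *: binomial_poly b n + ('X + d%:P) * binomial_poly a n.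
Proof.
move=> a_rec; rewrite binomial_polyS (eq_binomial_poly _ _ _ a_rec).
have -> : binomial_poly (fun k => c * b k + d * a k) n =
    c *: binomial_poly b n + d%:P * binomial_poly a n.
  rewrite /binomial_poly mul_polyC !scaler_sumr -big_split /=.
  by apply: eq_bigr => k _; rewrite !scalerA -scalerDl; congr (_ *: _); ring.
by rewrite mulrDl addrCA addrA.
Qed.

End BinomialPoly.

Lemma stirling1_small m k : (m < k)%N -> stirling1 m k = 0.
Proof.
move=> lt_mk; rewrite /stirling1 nth_default // size_prod_XsubC.
by rewrite [index_enum _]unlock -enumT -cardT card_ord.
Qed.

Lemma stirling1S m k :
  stirling1 m.+1 k = (if k is k'.+1 then stirling1 m k' else 0) - m%:R * stirling1 m k.
Proof.
rewrite /stirling1 big_ord_recr /= mulrBr coefB coefMX coefMC.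
by case: k => [|k] /=; rewrite mulrC.
Qed.

Definition stirling1_transform (a : nat -> rat) (m : nat) : rat :=
  \sum_(k < m.+1) stirling1 m k * a k.

Lemma stirling1_transformS a m :
  stirling1_transform a m.+1 =
    stirling1_transform (fun k => a k.+1) m - m%:R * stirling1_transform a m.
Proof.
rewrite /stirling1_transform.
under eq_bigr do rewrite stirling1S mulrBl.
rewrite sumrB big_ord_recl mul0r add0r [X in _ - X]big_ord_recr /=.
rewrite stirling1_small // mulr0 mul0r addr0 mulr_sumr; congr (_ - _).
by apply: eq_bigr => k _; rewrite mulrA.
Qed.

Fixpoint stirling2 (j n : nat) : nat :=
  match j, n with
  | 0, _ => n == 0%N
  | j'.+1, 0 => 0
  | j'.+1, n'.+1 => stirling2 j' n' + n'.+1 * stirling2 j' n'.+1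
  end.

Lemma stirling2_small j n : (j < n)%N -> stirling2 j n = 0%N.
Proof.
elim: j n => [|j IHj] [|n] //= lt_jn.
by rewrite !IHj ?muln0 // ltnW.
Qed.

Lemma stirling1_transform_stirling2 m n :
  stirling1_transform (fun k => (stirling2 k n)%:R) m = (m == n)%:R.
Proof.
elim: m n => [|m IHm] n.
  by rewrite /stirling1_transform big_ord1 /stirling1 big_ord0 coefC mul1r; case: n.
rewrite stirling1_transformS IHm; case: n => [|n].
  rewrite /stirling1_transform big1 ?sub0r => [|k _]; last by rewrite mulr0.
  by case: m {IHm} => [|m]; rewrite ?mul0r ?mulr0 ?oppr0.
have -> : stirling1_transform (fun k => (stirling2 k.+1 n.+1)%:R) m =
    (m == n)%:R + n.+1%:R * (m == n.+1)%:R.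
  rewrite -!IHm /stirling1_transform mulr_sumr -big_split /=.
  by apply: eq_bigr => k _; rewrite natrD natrM; ring.
rewrite eqSS; have [->|_] := eqVneq m n.+1; first by rewrite addrK.
by rewrite !mulr0 subr0 addr0.
Qed.

Lemma fact_natr_neq0 n : (n`!%:R : rat) != 0.
Proof. by rewrite pnatr_eq0 -lt0n fact_gt0. Qed.

Lemma deriv_expTrunc N : (expTrunc N)^`() = expTrunc N - (N`!%:R)^-1 *: 'X^N.
Proof.
apply/polyP => i; rewrite coef_deriv coefB coefZ coefXn !coef_poly !ltnS.
have [_|_|->] := ltngtP i N; rewrite ?mul0rn ?mulr0 ?subr0 ?mulr1 ?subrr //.
by rewrite factS natrM; field; rewrite fact_natr_neq0 nat1r pnatr_eq0.
Qed.

Lemma coef_expTrunc_subr1X N n j : (j <= N)%N ->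
  j`!%:R * ((expTrunc N - 1) ^+ n)`_j = n`!%:R * (stirling2 j n)%:R.
Proof.
set f := expTrunc N - 1.
have f0 : f`_0 = 0 by rewrite coefB coef_poly coefC subrr.
(* The truncation only perturbs f' in degree N, beyond the coefficients used. *)
have df : f^`() = f + 1 - (N`!%:R)^-1 *: 'X^N.
  by rewrite derivB derivC subr0 deriv_expTrunc subrK.
elim: j n => [|j IHj] n le_jN.
  rewrite -horner_coef0 horner_exp horner_coef0 f0 mul1r.
  by case: n => [|n]; rewrite ?expr0 ?mul1r // expr0n mulr0.
case: n => [|n]; first by rewrite expr0 coefC mulr0.
have le_jN' : (j <= N)%N by rewrite ltnW.
have coef_j : ((f ^+ n.+1)^`())`_j = n.+1%:R * ((f ^+ n.+1)`_j + (f ^+ n)`_j).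
  rewrite deriv_exp /= coefMn df mulrBl mulrDl mul1r -exprS -scalerAl.
  by rewrite coefB coefD coefZ coefXnM le_jN mulr0 subr0 mulr_natl.
rewrite coef_deriv in coef_j; rewrite /= natrD natrM !factS !natrM.
have -> : j.+1%:R * j`!%:R * (f ^+ n.+1)`_j.+1 =
    j`!%:R * ((f ^+ n.+1)`_j.+1 *+ j.+1) by rewrite mulr_natr; ring.
by rewrite coef_j mulrCA mulrDr !IHj // factS natrM; ring.
Qed.

Lemma pBell_stirling2 N p :
  pBell N p = \sum_(n < N.+1) (stirling2 N n)%:R / 'C(n + p, p)%:R.
Proof.
rewrite /pBell coef_sum mulr_sumr; apply: eq_bigr => n _.
rewrite coefZ mulrCA coef_expTrunc_subr1X // [_ / _]mulrC mulrA.
by rewrite [_ / _ * _]mulrAC mulVf ?mul1r 1?mulrC // fact_natr_neq0.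
Qed.

Lemma stirling1_transform_pBell m p :
  stirling1_transform (pBell^~ p) m = ('C(m + p, p)%:R)^-1.
Proof.
set F := fun k n => (stirling2 k n)%:R / ('C(n + p, p)%:R : rat).
have widen (k : 'I_m.+1) : pBell k p = \sum_(n < m.+1) F k n.
  rewrite pBell_stirling2 (big_ord_widen _ (F k) (ltn_ord k)) big_mkcond /=.
  by apply: eq_bigr => n _; case: ltnP => // lt_kn; rewrite /F stirling2_small ?mul0r.
have column n : \sum_(k < m.+1) stirling1 m k * F k n = (m == n)%:R / 'C(n + p, p)%:R.
  rewrite -(stirling1_transform_stirling2 m n) /stirling1_transform mulr_suml.
  by apply: eq_bigr => k _; rewrite mulrA.
rewrite /stirling1_transform; under eq_bigr do rewrite widen mulr_sumr.
rewrite exchange_big /=; under eq_bigr do rewrite column.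
rewrite big_ord_recr /= eqxx mul1r.
by rewrite big1 ?add0r // => n _; rewrite gtn_eqF ?mul0r.
Qed.

Lemma Zp_0m m p : Defs.Zp 0 m p = 1.
Proof.
rewrite /Defs.Zp -/(stirling1_transform (pBell^~ p) m) stirling1_transform_pBell.
by rewrite mulfV // pnatr_eq0 -lt0n bin_gt0 leq_addl.
Qed.

Lemma ZpS n m p :
  Defs.Zp n.+1 m p =
    (m.+1%:R / (m + p).+1%:R) * Defs.Zp n m.+1 p + m%:R * Defs.Zp n m p.
Proof.
have binC : m.+1%:R / (m + p).+1%:R * 'C(m.+1 + p, p)%:R = 'C(m + p, p)%:R :> rat.
  have binN : ('C(m + p, p) * (m + p).+1 = m.+1 * 'C(m.+1 + p, p))%N.
    by rewrite mulnC mul_bin_down subSn ?leq_addl // addnK addSn.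
  by rewrite mulrAC -natrM -binN natrM mulfK // pnatr_eq0.
have shift : stirling1_transform (fun k => pBell (n + k) p) m.+1 =
    stirling1_transform (fun k => pBell (n.+1 + k) p) m -
    m%:R * stirling1_transform (fun k => pBell (n + k) p) m.
  by rewrite stirling1_transformS /stirling1_transform; under eq_bigr do rewrite addnS.
rewrite /stirling1_transform in shift.
by rewrite /Defs.Zp shift -binC; ring.
Qed.

Theorem mainTheorem14 (n m p : nat) :
  Zpoly n.+1 m p =
    (((m.+1)%:R / ((m + p).+1)%:R : rat) *: Zpoly n m.+1 p)
    + ('X + (m%:R)%:P) * Zpoly n m p
  /\ Zpoly 0 m p = 1.
Proof.
split; first exact: binomial_poly_rec (fun k => ZpS k m p).
by rewrite /Zpoly big_ord1 Zp_0m mul1r scale1r.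
Qed.
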